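(* Let $\varepsilon>0$, $r\ge 3$, and let $G$ be an $\varepsilon$-ultra maximal $K_r$-free graph. Then $\tau^*(\mathcal{B}(G))\le C(\varepsilon,r)$ for a constant $C(\varepsilon,r)$ depending only on $\varepsilon$ and $r$.
   Context: An $n$-vertex graph $G$ is $\varepsilon$-ultra maximal $K_r$-free if it is $K_r$-free and for every pair of non-adjacent vertices $u,v$, $G[N(u)\cap N(v)]$ contains at least $\varepsilon n^{r-2}$ copies of $K_{r-2}$. $\mathcal{B}(G)=\{K_v: v\in V(G)\}$ with $K_v=\{I\in\mathrm{MIS}(G): v\in I\}$, a set system on the ground set $\mathrm{MIS}(G)$ of maximal independent sets of $G$. The fractional transversal number $\tau^*(\mathcal{F})$ is the minimum of $\sum_{x}f(x)$ over functions $f$ from the ground set to $[0,1]$ with $\sum_{x\in A}f(x)\ge 1$ for every $A\in\mathcal{F}$. *)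

From HB Require Import structures.
From mathcomp Require Import all_boot all_order all_algebra.
From mathcomp Require Import boolp classical_sets reals.
Set Implicit Arguments. Unset Strict Implicit. Unset Printing Implicit Defensive.
Import Order.TTheory GRing.Theory Num.Theory.
Local Open Scope ring_scope.

Section Graphs.
Variable T : finType.
Variable e : rel T.

Definition simple_graph := symmetric e /\ irreflexive e.

Definition nbhd (v : T) : {set T} := [set w | e v w].

Definition is_clique (S : {set T}) : bool :=
  [forall x in S, forall y in S, (x != y) ==> e x y].

Definition is_independent (S : {set T}) : bool :=
  [forall x in S, forall y in S, ~~ e x y].

Definition Kr_free (r : nat) : Prop :=
  ~ exists S : {set T}, #|S| = r /\ is_clique S.

Definition num_cliques_in (k : nat) (U : {set T}) : nat :=
  #|[set S : {set T} | [&& S \subset U, #|S| == k & is_clique S]]|.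

Definition MIS : {set {set T}} := [set I | maxset is_independent I].

Definition Kv (v : T) : {set {set T}} := [set I in MIS | v \in I].

Definition BG : {set {set {set T}}} := [set Kv v | v : T].

End Graphs.

Definition ultra_maximal_Kr_free {R : numDomainType} (T : finType) (e : rel T)
    (eps : R) (r : nat) : Prop :=
  Kr_free e r /\
  forall u v : T, u != v -> ~~ e u v ->
    eps * (#|T|%:R) ^+ (r - 2) <= (num_cliques_in e (r - 2) (nbhd e u :&: nbhd e v))%:R.

Definition frac_transversal_number {R : realType} (U : finType) (X : {set U})
    (F : {set {set U}}) : R :=
  inf [set s : R | exists f : U -> R,
         (forall x, x \in X -> 0 <= f x <= 1) /\
         (forall A, A \in F -> 1 <= \sum_(x in A) f x) /\
         s = \sum_(x in X) f x].

From HB Require Import structures.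
From mathcomp Require Import all_boot all_order all_algebra.
From mathcomp Require Import boolp classical_sets reals.
From mathcomp Require Import zify.
Set Implicit Arguments. Unset Strict Implicit. Unset Printing Implicit Defensive.
Import Order.TTheory GRing.Theory Num.Theory.
Local Open Scope ring_scope.

(* For an (r-2)-clique K of G, the common neighbourhood of K is independent,
   since an edge inside it would complete K to a K_r; extend it to a maximal
   independent set I_K.  Put weight 1/(eps n^(r-2)) on each I_K, and weight 1 on
   a maximal independent set through each universal vertex.  A vertex v that is
   not universal has a non-neighbour u, and each of the at least eps n^(r-2)
   cliques K in N(u) ∩ N(v) has v in I_K, so K_v receives weight at least 1.
   There are at most n^(r-2) cliques, and fewer than r universal vertices since
   they form a clique, so the total weight is at most 1/eps + r; truncating the
   weights at 1 gives a fractional transversal. *)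

Lemma ffact_leq_expn n m : (n ^_ m <= n ^ m)%N.
Proof.
rewrite ffact_prod -[X in (_ <= _ ^ X)%N]card_ord -prod_nat_const.
by apply: leq_prod => i _; apply: leq_subr.
Qed.

Lemma bin_leq_expn n m : ('C(n, m) <= n ^ m)%N.
Proof.
by rewrite (leq_trans _ (ffact_leq_expn n m)) // -bin_ffact leq_pmulr ?fact_gt0.
Qed.

Lemma exists_subset_card (T : finType) (A : {set T}) k :
  (k <= #|A|)%N -> exists2 B : {set T}, B \subset A & #|B| = k.
Proof.
rewrite -bin_gt0 -cards_draws => /card_gt0P[B].
by rewrite inE => /andP[BA /eqP cardB]; exists B.
Qed.

Lemma sum_card_fibres (J U : finType) (f : J -> U) (D : {set J}) (A : {set U}) :
  (\sum_(I in A) #|[set j in D | f j == I]| = #|[set j in D | f j \in A]|)%N.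
Proof.
rewrite -sum1_card (partition_big f (mem A)) => [|j]; last by rewrite inE => /andP[].
apply: eq_bigr => I IA; rewrite -sum1_card; apply: eq_bigl => j.
by rewrite !inE; case: eqP => [->|]; rewrite ?IA ?andbT ?andbF.
Qed.

Section FractionalTransversal.
Variables (R : realType) (U : finType).

Lemma sum_min1_ge1 (A : {set U}) (g : U -> R) :
  (forall x, 0 <= g x) -> 1 <= \sum_(x in A) g x ->
  1 <= \sum_(x in A) Num.min (g x) 1.
Proof.
move=> g_ge0 sum_ge1.
have [/existsP[x /andP[xA gx_ge1]] | /existsPn small] := boolP [exists x in A, 1 <= g x].
  rewrite (bigD1 x) //= (min_r gx_ge1) lerDl.
  by apply: sumr_ge0 => y _; rewrite le_min g_ge0 ler01.
rewrite (eq_bigr g) // => y yA; apply: min_l; apply: ltW.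
by move: (small y); rewrite yA /= -ltNge.
Qed.

Lemma frac_transversal_number_le (X : {set U}) (F : {set {set U}}) (g : U -> R) :
  (forall x, 0 <= g x) -> (forall A, A \in F -> 1 <= \sum_(x in A) g x) ->
  frac_transversal_number X F <= \sum_(x in X) g x.
Proof.
move=> g_ge0 g_cover; set f := fun x => Num.min (g x) 1.
have f_frac x : 0 <= f x <= 1 by rewrite le_min g_ge0 ler01 ge_min lexx orbT.
apply: (@le_trans _ _ (\sum_(x in X) f x)); last first.
  by apply: ler_sum => x _; rewrite ge_min lexx.
apply: ge_inf.
  by exists 0 => _ [h [h_frac [_ ->]]]; apply: sumr_ge0 => x /h_frac /andP[].
exists f; split=> [x _ //|]; split=> // A /g_cover; exact: sum_min1_ge1.
Qed.
End FractionalTransversal.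

Section Graph.
Variables (T : finType) (e : rel T).
Hypotheses (e_sym : symmetric e) (e_irr : irreflexive e).

Definition mis_of (S : {set T}) : {set T} :=
  odflt finset.set0 [pick I in MIS e | S \subset I].

Lemma mis_ofP S : is_independent e S -> mis_of S \in MIS e /\ S \subset mis_of S.
Proof.
rewrite /mis_of; case: pickP => [I /andP[] //| noI S_indep].
have [I I_max SI] := maxset_exists S_indep.
by move: (noI I); rewrite inE I_max SI.
Qed.

Lemma mis_of_Kv S v : is_independent e S -> v \in S -> mis_of S \in Kv e v.
Proof.
by move=> /mis_ofP[S_mis /fintype.subsetP SI] vS; rewrite inE S_mis SI.
Qed.

Lemma independent_set1 v : is_independent e [set v].
Proof.
apply/forallP => x; apply/implyP => /set1P->.
by apply/forallP => y; apply/implyP => /set1P->; rewrite e_irr.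
Qed.

Lemma clique_subset (S S' : {set T}) : S' \subset S -> is_clique e S -> is_clique e S'.
Proof.
move=> /fintype.subsetP sub /forallP S_cl; apply/forallP => x; apply/implyP => xS'.
apply/forallP => y; apply/implyP => yS'.
by move: (S_cl x) => /implyP/(_ (sub x xS'))/forallP/(_ y)/implyP/(_ (sub y yS')).
Qed.

Lemma clique_setU1 x (S : {set T}) :
  is_clique e S -> (forall y, y \in S -> e x y) -> is_clique e (x |: S).
Proof.
move=> /forallP S_cl xS; apply/forallP => a; apply/implyP => /setU1P aS.
apply/forallP => b; apply/implyP => /setU1P bS; apply/implyP => ab.
case: aS bS ab => [->|aS] [->|bS] ab; first by rewrite eqxx in ab.
- exact: xS.
- by rewrite e_sym xS.
by move: (S_cl a) => /implyP/(_ aS)/forallP/(_ b)/implyP/(_ bS)/implyP/(_ ab).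
Qed.

Variable r : nat.
Hypothesis e_Kr_free : Kr_free e r.

Lemma clique_card_lt S : is_clique e S -> (#|S| < r)%N.
Proof.
move=> S_cl; rewrite ltnNge; apply/negP => /exists_subset_card[B BS cardB].
by apply: e_Kr_free; exists B; split; last exact: clique_subset S_cl.
Qed.

Definition common_nbhd (K : {set T}) : {set T} := [set x | K \subset nbhd e x].

Lemma common_nbhd_independent (K : {set T}) :
  (2 <= r)%N -> #|K| = (r - 2)%N -> is_clique e K -> is_independent e (common_nbhd K).
Proof.
move=> r_ge2 cardK K_cl; apply/forallP => x; apply/implyP.
rewrite inE => /fintype.subsetP Kx; apply/forallP => y; apply/implyP.
rewrite inE => /fintype.subsetP Ky; apply/negP => exy.
have eK z k : {subset K <= nbhd e z} -> k \in K -> e z k by move=> Kz /Kz; rewrite inE.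
have xK : x \notin K by apply/negP => /(eK x _ Kx); rewrite e_irr.
have yK : y \notin K by apply/negP => /(eK y _ Ky); rewrite e_irr.
have yxK : y \notin x |: K.
  by rewrite !inE negb_or yK andbT; apply: contraTneq exy => ->; rewrite e_irr.
have xK_cl : is_clique e (x |: K) by apply: clique_setU1 => // k /(eK x _ Kx).
have yxK_cl : is_clique e (y |: (x |: K)).
  by apply: clique_setU1 => // z /setU1P[->|/(eK y _ Ky)//]; rewrite e_sym.
by have := clique_card_lt yxK_cl; rewrite !cardsU1 yxK xK cardK; lia.
Qed.

Definition universal : {set T} := [set x | [forall y, (y != x) ==> e x y]].

Lemma card_universal_lt : (#|universal| < r)%N.
Proof.
apply: clique_card_lt; apply/forallP => x; apply/implyP; rewrite inE => /forallP x_univ.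
apply/forallP => y; apply/implyP => _; apply/implyP => xy.
by move: (x_univ y) => /implyP; apply; rewrite eq_sym.
Qed.

Definition cliques (k : nat) : {set {set T}} :=
  [set K : {set T} | (#|K| == k) && is_clique e K].

Lemma card_cliques_le k : (#|cliques k| <= #|T| ^ k)%N.
Proof.
apply: leq_trans (bin_leq_expn _ _); rewrite -card_draws subset_leq_card //.
by apply/fintype.subsetP => K; rewrite !inE => /andP[].
Qed.

Variables (R : realType) (c : R).

Definition cover_weight (I : {set T}) : R :=
  c * #|[set K in cliques (r - 2) | mis_of (common_nbhd K) == I]|%:R
  + #|[set x in universal | mis_of [set x] == I]|%:R.

Lemma sum_cover_weight (A : {set {set T}}) :
  \sum_(I in A) cover_weight I =
  c * #|[set K in cliques (r - 2) | mis_of (common_nbhd K) \in A]|%:R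
  + #|[set x in universal | mis_of [set x] \in A]|%:R.
Proof. by rewrite big_split /= -mulr_sumr -!natr_sum !sum_card_fibres. Qed.

Hypotheses (c_ge0 : 0 <= c) (r_ge2 : (2 <= r)%N).

Lemma cover_weight_ge0 I : 0 <= cover_weight I.
Proof. by rewrite addr_ge0 ?mulr_ge0. Qed.

Hypothesis many_common_cliques : forall u v, u != v -> ~~ e u v ->
  1 <= c * (num_cliques_in e (r - 2) (nbhd e u :&: nbhd e v))%:R.

Lemma sum_Kv_cover_weight_ge1 v : 1 <= \sum_(I in Kv e v) cover_weight I.
Proof.
rewrite sum_cover_weight.
have [v_univ | ] := boolP (v \in universal); last first.
  rewrite inE => /forallPn[u]; rewrite negb_imply => /andP[uv evu].
  have vu : v != u by rewrite eq_sym.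
  apply: le_trans (many_common_cliques vu evu) _.
  rewrite ler_wpDr // ler_wpM2l // ler_nat subset_leq_card //.
  apply/fintype.subsetP => K; rewrite inE => /and3P[K_nbhd cardK K_cl].
  rewrite inE [_ \in cliques _]inE cardK K_cl /=; apply: mis_of_Kv.
    exact: common_nbhd_independent (eqP cardK) K_cl.
  by rewrite inE; apply: fintype.subset_trans K_nbhd (subsetIl _ _).
apply: le_trans (_ : 1 <= #|[set x in universal | mis_of [set x] \in Kv e v]|%:R) _.
  rewrite ler1n card_gt0; apply/set0Pn; exists v.
  by rewrite inE v_univ mis_of_Kv ?independent_set1 ?set11.
by rewrite ler_wpDl ?mulr_ge0.
Qed.

End Graph.

Lemma invfM_mulr_le (R : realFieldType) (x y : R) :
  0 < x -> 0 <= y -> (x * y)^-1 * y <= x^-1.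
Proof.
move=> x_gt0 y_ge0; have [->|y_neq0] := eqVneq y 0; first by rewrite !mulr0 invr_ge0 ltW.
by rewrite invfM -mulrA mulVf // mulr1.
Qed.

Unset Implicit Arguments.
Theorem lemma2p18 (R : realType) (eps : R) (r : nat) :
  0 < eps -> (3 <= r)%N ->
  exists C : R,
    forall (T : finType) (e : rel T),
      simple_graph e ->
      ultra_maximal_Kr_free e eps r ->
      frac_transversal_number (MIS e) (BG e) <= C.
Proof.
move=> eps_gt0 r_ge3; exists (eps^-1 + r%:R) => T e [e_sym e_irr] [e_Kr_free e_ultra].
set N : R := #|T|%:R ^+ (r - 2); set c := (eps * N)^-1.
have r_ge2 : (2 <= r)%N by apply: ltnW.
have N_ge0 : 0 <= N by rewrite exprn_ge0 ?ler0n.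
have c_ge0 : 0 <= c by rewrite /c invr_ge0 mulr_ge0 // ltW.
have many_common_cliques u v : u != v -> ~~ e u v ->
    1 <= c * (num_cliques_in e (r - 2) (nbhd e u :&: nbhd e v))%:R.
  move=> uv euv; have N_gt0 : 0 < N.
    by rewrite exprn_gt0 // ltr0n; apply/card_gt0P; exists u.
  by rewrite mulrC ler_pdivlMr ?mulr_gt0 // mul1r e_ultra.
apply: le_trans (frac_transversal_number_le _ (g := cover_weight e r c) _ _) _.
- by move=> I; apply: cover_weight_ge0.
- by move=> _ /imsetP[v _ ->]; apply: sum_Kv_cover_weight_ge1.
rewrite sum_cover_weight lerD // ?ler_nat.
- apply: le_trans (invfM_mulr_le eps_gt0 N_ge0).
  rewrite ler_wpM2l // /N -natrX ler_nat.
  apply: leq_trans (card_cliques_le e (r - 2)).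
  by rewrite setIdE subset_leq_card ?subsetIl.
- apply: leq_trans (ltnW (card_universal_lt e_Kr_free)).
  by rewrite setIdE subset_leq_card ?subsetIl.
Qed.
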